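(* For $\alpha\in\mathbb{K}^\times$ let $A_{4,\alpha}$ be the evolution algebra over the field $\mathbb{K}$ with natural basis $\{e_1,e_2\}$ such that $e_1^2=\alpha e_2$ and $e_2^2=e_1+e_2$. For $\alpha,\alpha'\in\mathbb{K}^\times$, $A_{4,\alpha}$ is isomorphic to $A_{4,\alpha'}$ as a $\mathbb{K}$-algebra if and only if $\alpha=\alpha'$.
   Context: An evolution algebra over $\mathbb{K}$ is a $\mathbb{K}$-algebra with a basis $\{e_i\}$ (natural basis) such that $e_ie_j=0$ for $i\neq j$. *)

From HB Require Import structures.
From mathcomp Require Import all_boot all_order all_algebra.
Set Implicit Arguments. Unset Strict Implicit. Unset Printing Implicit Defensive.
Import GRing.Theory.
Local Open Scope ring_scope.

(* An evolution algebra of dimension n over K, presented on K^n = 'rV[K]_n with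
   natural basis the standard basis vectors e_i = delta_mx 0 i, and structure
   matrix C: e_i * e_i = \sum_j C i j e_j (= row i C), e_i * e_j = 0 for i <> j. *)
Definition evo_mul (K : fieldType) (n : nat) (C : 'M[K]_n)
    (x y : 'rV[K]_n) : 'rV[K]_n :=
  \sum_(i < n) (x 0 i * y 0 i) *: row i C.

Definition evo_iso (K : fieldType) (n : nat) (C C' : 'M[K]_n) : Prop :=
  exists f : {linear 'rV[K]_n -> 'rV[K]_n},
    bijective f /\ forall x y, f (evo_mul C x y) = evo_mul C' (f x) (f y).

(* A_{4,alpha}: e_1^2 = alpha e_2, e_2^2 = e_1 + e_2 (indices 0,1 here). *)
Definition A4 (K : fieldType) (alpha : K) : 'M[K]_2 :=
  \matrix_(i < 2, j < 2)
    if i == 0 :> nat then (if j == 0 :> nat then 0 else alpha) else 1.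

(* Write f(e_1) = (a, b) and f(e_2) = (c, d) for an isomorphism f : A_{4,alpha} -> A_{4,alpha'}.
   Applying f to e_1 e_2 = 0, e_1^2 = alpha e_2 and e_2^2 = e_1 + e_2 gives six polynomial
   equations in a, b, c, d.  If b <> 0 they force d = 0, then a = 0 and finally c = 0,
   which contradicts b^2 = alpha c.  Hence b = 0, so c = 0, and d <> 0 by injectivity;
   then d^2 = d gives d = 1, so a = 1, and alpha' a^2 + b^2 = alpha d reads alpha' = alpha. *)
From HB Require Import structures.
From mathcomp Require Import all_boot all_order all_algebra.
From mathcomp Require Import ring.
Import GRing.Theory.
Local Open Scope ring_scope.

Section EvolutionAlgebra.
Variables (K : fieldType) (n : nat).

Lemma evo_mul_coord (C : 'M[K]_n) x y j :
  evo_mul C x y 0 j = \sum_i x 0 i * y 0 i * C i j.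
Proof. by rewrite /evo_mul summxE; apply: eq_bigr => i _; rewrite !mxE. Qed.

Lemma evo_mul_delta (C : 'M[K]_n) i j :
  evo_mul C 'e_i 'e_j = if i == j then row i C else 0.
Proof.
rewrite /evo_mul (bigD1 i) //= big1 => [|k /negPf ki]; last first.
  by rewrite !mxE ki mul0r scale0r.
by rewrite !mxE !eqxx addr0 mul1r /=; case: (i == j); rewrite ?scale1r ?scale0r.
Qed.

Lemma evo_iso_refl (C : 'M[K]_n) : evo_iso C C.
Proof. by exists idfun; split=> //; exists idfun. Qed.

End EvolutionAlgebra.

Lemma sum_ord2 (V : nmodType) (F : 'I_2 -> V) : \sum_(i < 2) F i = F 0 + F 1.
Proof. by rewrite big_ord_recl big_ord1 (_ : lift ord0 ord0 = 1) //; apply: val_inj. Qed.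

Section A4.
Variables (K : fieldType) (alpha : K).

Lemma A4_mul0 x y : evo_mul (A4 alpha) x y 0 0 = x 0 1 * y 0 1.
Proof. by rewrite evo_mul_coord sum_ord2 !mxE /= mulr0 mulr1 add0r. Qed.

Lemma A4_mul1 x y :
  evo_mul (A4 alpha) x y 0 1 = alpha * (x 0 0 * y 0 0) + x 0 1 * y 0 1.
Proof. by rewrite evo_mul_coord sum_ord2 !mxE /=; ring. Qed.

Lemma row0_A4 : row 0 (A4 alpha) = alpha *: 'e_1.
Proof. by apply/rowP => j; rewrite !mxE; case: j => [[|[|]]] //= _; rewrite (mulr0, mulr1). Qed.

Lemma row1_A4 : row 1 (A4 alpha) = 'e_0 + 'e_1.
Proof. by apply/rowP => j; rewrite !mxE; case: j => [[|[|]]] //= _; rewrite (addr0, add0r). Qed.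

End A4.

Section A4IsoEquations.
Variables (K : fieldType) (alpha alpha' a b c d : K).
(* (a, b) and (c, d) stand for f 'e_0 and f 'e_1; [eij_k] is coordinate k of
   f 'e_i * f 'e_j = f ('e_i * 'e_j) in A4 alpha'. *)
Hypotheses (alpha_neq0 : alpha != 0) (alpha'_neq0 : alpha' != 0).
Hypothesis cd_neq0 : (c, d) != (0, 0).
Hypotheses (e01_0 : b * d = 0) (e01_1 : alpha' * (a * c) + b * d = 0).
Hypotheses (e00_0 : b * b = alpha * c) (e00_1 : alpha' * (a * a) + b * b = alpha * d).
Hypotheses (e11_0 : d * d = a + c) (e11_1 : alpha' * (c * c) + d * d = b + d).

Lemma A4_iso_equations_alpha_eq : alpha = alpha'.
Proof.
have b0 : b = 0.
  apply/eqP/negP => /negP bn0.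
  have cn0 : c != 0.
    apply: contra_neq bn0 => c0; apply/eqP.
    by move/eqP: e00_0; rewrite c0 mulr0 mulf_eq0 orbb.
  have d0 : d = 0 by apply/eqP; move/eqP: e01_0; rewrite mulf_eq0 (negPf bn0).
  have a0 : a = 0.
    apply/eqP; move/eqP: e01_1.
    by rewrite d0 mulr0 addr0 !mulf_eq0 (negPf alpha'_neq0) (negPf cn0) orbF.
  by move: e11_0; rewrite d0 a0 mulr0 add0r => /esym/eqP; rewrite (negPf cn0).
have c0 : c = 0.
  by apply/eqP; move/eqP: e00_0; rewrite b0 mul0r eq_sym mulf_eq0 (negPf alpha_neq0).
have dn0 : d != 0 by apply: contraNneq cd_neq0 => d0; rewrite c0 d0.
have d1 : d = 1.
  by apply: (mulIf dn0); move: e11_1; rewrite b0 c0 mul0r mulr0 !add0r mul1r.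
have a1 : a = 1 by rewrite -[a]addr0 -c0 -e11_0 d1 mulr1.
by move: e00_1; rewrite a1 b0 d1 !mulr1 mul0r addr0 => ->.
Qed.

End A4IsoEquations.

Theorem lemma3p5 (K : fieldType) (alpha alpha' : K) :
  alpha != 0 -> alpha' != 0 ->
  (evo_iso (A4 alpha) (A4 alpha') <-> alpha = alpha').
Proof.
move=> ha ha'; split=> [[f [[g fK _] f_mul]]|<-]; last exact: evo_iso_refl.
have f_basis i j : evo_mul (A4 alpha') (f 'e_i) (f 'e_j) =
    f (if i == j then row i (A4 alpha) else 0).
  by rewrite -f_mul evo_mul_delta.
have fe1_neq0 : (f 'e_1 0 0, f 'e_1 0 1) != (0, 0).
  apply/eqP => -[c0 d0]; have : f 'e_1 = f 0.
    by rewrite linear0 [LHS]row_sum_delta sum_ord2 c0 d0 !scale0r !addr0.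
  by move/(can_inj fK)/rowP/(_ 1); rewrite !mxE /= => /eqP; rewrite oner_eq0.
move: (f_basis 0 1) (f_basis 0 0) (f_basis 1 1).
rewrite /= row0_A4 row1_A4 linear0 linearZ linearD.
move=> /rowP e01 /rowP e00 /rowP e11.
move: (e01 0) (e01 1) (e00 0) (e00 1) (e11 0) (e11 1).
rewrite !A4_mul0 !A4_mul1 !mxE.
exact: A4_iso_equations_alpha_eq.
Qed.
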